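(* Let $C$ be a bounded subset of a Banach space and let $\mathcal S$ be a semigroup (under composition) of self-mappings of $C$ generated by a family of firmly nonexpansive mappings $C\to C$. Suppose $\mathcal S$ is subsurjective, i.e. there is a nonempty set $D\subset C$ with $T(D)=D$ for every $T\in\mathcal S$. Then $\mathcal S$ has a common fixed point in $C$.
   Context: A mapping $T:C\to C$ is firmly nonexpansive if $\|Tx-Ty\|\le \|\alpha(x-y)+(1-\alpha)(Tx-Ty)\|$ for all $x,y\in C$ and all $\alpha\in(0,1)$. *)

From HB Require Import structures.
From mathcomp Require Import all_boot all_order all_algebra.
From mathcomp Require Import all_classical all_reals all_analysis.
Set Implicit Arguments. Unset Strict Implicit. Unset Printing Implicit Defensive.
Import Order.TTheory GRing.Theory Num.Theory.
Import numFieldNormedType.Exports.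
Local Open Scope classical_set_scope.
Local Open Scope ring_scope.

Definition self_map {V : Type} (C : set V) (T : V -> V) : Prop :=
  forall x, C x -> C (T x).

Definition firmly_nonexpansive {R : realType} {V : normedModType R}
  (C : set V) (T : V -> V) : Prop :=
  forall x y, C x -> C y -> forall a : R, 0 < a < 1 ->
    `|T x - T y| <= `|a *: (x - y) + (1 - a) *: (T x - T y)|.

Inductive gen_semigroup {V : Type} (F : set (V -> V)) : (V -> V) -> Prop :=
  | gen_base T : F T -> gen_semigroup F T
  | gen_comp T1 T2 : gen_semigroup F T1 -> gen_semigroup F T2 ->
      gen_semigroup F (T1 \o T2).

Definition subsurjective {V : Type} (C : set V) (S : set (V -> V)) : Prop :=
  exists D : set V, D !=set0 /\ D `<=` C /\ forall T, S T -> T @` D = D.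

From HB Require Import structures.
From mathcomp Require Import all_boot all_order all_algebra.
From mathcomp Require Import all_classical all_reals all_analysis.
From mathcomp Require Import ring lra.
Set Implicit Arguments. Unset Strict Implicit. Unset Printing Implicit Defensive.
Import Order.TTheory GRing.Theory Num.Theory.
Import numFieldNormedType.Exports.
Local Open Scope classical_set_scope.
Local Open Scope ring_scope.

(* Only the case [a = 1/2] of firm nonexpansiveness is needed, and every point
   of [D] turns out to be fixed by each map of the semigroup. For such a map [T]
   with [T(D) = D], let [L] be the supremum of [|y - T y|] over [D]. Along a
   backward orbit [x_0 <- x_1 <- x_2 <- ...] in [D] the steps [|x_{n+1} - x_n|]
   are nondecreasing, and the firm inequality forces the gaps [|x_{m+k} - x_m|]
   to be nearly additive: starting within [eps] of [L], the gap after [k] steps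
   is at least [k L - 2^k eps]. Boundedness of [D] then forces [L = 0]. *)

Definition firm_at_half {R : realType} {V : normedModType R}
  (D : set V) (T : V -> V) : Prop :=
  forall x y, D x -> D y -> 2 * `|T x - T y| <= `|(x - y) + (T x - T y)|.

Lemma firmly_nonexpansive_at_half (R : realType) (V : normedModType R)
  (C D : set V) (T : V -> V) :
  D `<=` C -> firmly_nonexpansive C T -> firm_at_half D T.
Proof.
move=> DC Tfirm x y Dx Dy.
have half_in01 : 0 < (2^-1 : R) < 1.
  by apply/andP; split; [rewrite invr_gt0 | rewrite invf_lt1]; lra.
have := Tfirm x y (DC _ Dx) (DC _ Dy) _ half_in01.
have -> : 1 - 2^-1 = 2^-1 :> R by field.
by rewrite -scalerDr normrZ gtr0_norm ?invr_gt0 //; lra.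
Qed.

Lemma bounded_set_norm_le (R : realType) (V : normedModType R) (C : set V) :
  bounded_set C -> exists M : R, forall x, C x -> `|x| <= M.
Proof.
case=> M0 [M0_real M0_bound]; exists (`|M0| + 1) => x Cx.
apply: (M0_bound (`|M0| + 1)) => //.
by rewrite (le_lt_trans (real_ler_norm M0_real)) // ltrDl.
Qed.

Lemma backward_orbit_exists (V : Type) (D : set V) (T : V -> V) (x : V) :
  T @` D = D -> D x ->
  exists xs : nat -> V,
    [/\ xs 0%N = x, forall n, D (xs n) & forall n, T (xs n.+1) = xs n].
Proof.
move=> TD Dx.
have [pre preP] : exists pre : V -> V, forall y, D y -> D (pre y) /\ T (pre y) = y.
  suff /choice[pre preP] : forall y, exists z, D y -> D z /\ T z = y by exists pre.
  move=> y; have [|nDy] := pselect (D y); last by exists y.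
  by rewrite -[in D y]TD => -[z Dz <-]; exists z.
have Dorbit : forall n, D (iter n pre x) by elim=> //= n /preP[].
by exists (fun n => iter n pre x); split=> // n; have [] := preP _ (Dorbit n).
Qed.

Section FirmBackwardOrbit.
Variables (R : realType) (V : normedModType R) (D : set V) (T : V -> V).
Hypothesis Tfirm : firm_at_half D T.
Variable xs : nat -> V.
Hypotheses (Dxs : forall n, D (xs n)) (Txs : forall n, T (xs n.+1) = xs n).

Lemma backward_orbit_displacement_mono n :
  `|xs n - T (xs n)| <= `|xs n.+1 - T (xs n.+1)|.
Proof.
have := Tfirm (Dxs n.+1) (Dxs n); rewrite !Txs => firm.
by have := le_trans firm (ler_normD _ _); lra.
Qed.

Lemma backward_orbit_gap_midpoint k m :
  2 * `|xs (m + k.+1) - xs m|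
    <= `|xs (m + k.+2) - xs m| + `|xs (m.+1 + k) - xs m.+1|.
Proof.
have := Tfirm (Dxs (m.+1 + k.+1)) (Dxs m.+1).
rewrite !addSn !addnS !Txs => firm; apply: le_trans firm _.
by rewrite addrACA (addrC (- _)) -addrACA ler_normD.
Qed.

Variables L e : R.
Hypotheses (step_le : forall n, `|xs n.+1 - xs n| <= L)
           (step_gt : forall n, L - e < `|xs n.+1 - xs n|).

Lemma backward_orbit_gap_le k m : `|xs (m + k) - xs m| <= k%:R * L.
Proof.
elim: k => [|k IH]; first by rewrite addn0 subrr normr0 mul0r.
rewrite -(subrK (xs (m + k)) (xs (m + k.+1))) addnS -addrA.
rewrite (le_trans (ler_normD _ _)) // -[k.+1]addn1 natrD mulrDl mul1r.
by rewrite (addrC (_ * L)) lerD.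
Qed.

Lemma backward_orbit_gap_ge k m :
  k.+1%:R * L - 2 ^+ k.+1 * e <= `|xs (m + k.+1) - xs m|.
Proof.
have e_gt0 : 0 < e by have := step_le 0; have := step_gt 0; lra.
elim: k m => [|k IH] m; first by rewrite addn1 mul1r expr1; have := step_gt m; lra.
have := backward_orbit_gap_midpoint k m; have := IH m.
have := backward_orbit_gap_le k m.+1.
rewrite (exprS _ k.+1) -[k.+2]addn2 -[k.+1]addn1 !natrD !mulrDl -mulrA.
lra.
Qed.

End FirmBackwardOrbit.

Lemma firm_surjective_bounded_fixed (R : realType) (V : normedModType R)
  (D : set V) (T : V -> V) (M : R) :
  (forall x, D x -> `|x| <= M) -> firm_at_half D T -> T @` D = D ->
  forall x, D x -> T x = x.
Proof.
move=> DM Tfirm TD x Dx.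
have DT y : D y -> D (T y) by move=> Dy; rewrite -TD; exists y.
pose displacements := [set r | exists2 y, D y & r = `|y - T y|].
have displ_sup : has_sup displacements.
  split; first by exists `|x - T x|, x.
  exists (M + M) => _ [y Dy ->].
  exact: le_trans (ler_normB _ _) (lerD (DM _ Dy) (DM _ (DT _ Dy))).
set L := sup displacements.
have displ_le y : D y -> `|y - T y| <= L.
  by move=> Dy; apply: (sup_upper_bound displ_sup); exists y.
apply/eqP; rewrite eq_sym -subr_eq0 -normr_le0 (le_trans (displ_le _ Dx)) //.
rewrite leNgt; apply/negP => L_gt0.
have M_ge0 : 0 <= M by rewrite (le_trans _ (DM _ Dx)).
pose N := Num.bound ((M + M + 1) / L).
have NL_gt : M + M + 1 < N%:R * L.
  by rewrite -ltr_pdivrMr // archi_boundP // divr_ge0 ?ltW //; lra.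
have N_gt0 : (0 < N)%N by rewrite lt0n; apply: contraTneq NL_gt => ->; lra.
pose e : R := (2 ^+ N)^-1.
have e_gt0 : 0 < e by rewrite invr_gt0 exprn_gt0.
have [_ [x0 Dx0 ->] x0_near_sup] := sup_adherent e_gt0 displ_sup.
have [xs [xs0 Dxs Txs]] := backward_orbit_exists TD Dx0.
have displ_gt n : L - e < `|xs n - T (xs n)|.
  elim: n => [|n IH]; first by rewrite xs0.
  exact: lt_le_trans IH (backward_orbit_displacement_mono Tfirm Dxs Txs n).
have step_le n : `|xs n.+1 - xs n| <= L by rewrite -(Txs n) displ_le.
have step_gt n : L - e < `|xs n.+1 - xs n| by rewrite -(Txs n).
have := backward_orbit_gap_ge Tfirm Dxs Txs step_le step_gt N.-1 0.
rewrite prednK // /e mulfV ?expf_neq0 // add0n.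
have := le_trans (ler_normB (xs N) (xs 0%N)) (lerD (DM _ (Dxs N)) (DM _ (Dxs 0%N))).
lra.
Qed.

Theorem corollary3p11 (R : realType) (V : completeNormedModType R)
  (C : set V) (F : set (V -> V)) :
  bounded_set C ->
  (forall T, F T -> self_map C T /\ firmly_nonexpansive C T) ->
  subsurjective C (gen_semigroup F) ->
  exists x, C x /\ forall T, gen_semigroup F T -> T x = x.
Proof.
move=> /bounded_set_norm_le[M CM] Ffirm [D [[d Dd] [DC SD]]].
have fixD T : gen_semigroup F T -> forall x, D x -> T x = x.
  elim=> [T0 FT0 | T1 T2 _ fix1 _ fix2] x Dx; last by rewrite /= fix2 // fix1.
  apply: (firm_surjective_bounded_fixed (D := D) (M := M)) Dx.
  - by move=> y Dy; apply/CM/DC.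
  - exact: firmly_nonexpansive_at_half DC (Ffirm _ FT0).2.
  - exact/SD/gen_base.
by exists d; split=> [|T /fixD]; [exact: DC | apply].
Qed.
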